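(* Let $p$ be a prime and $n>1$ an integer. If $G$ is a finite $p$-group with $G\in\mathcal{D}_n$, then $G$ has nilpotency class at most $n/2$ and derived length at most $\log_2(n/2)+1$.
   Context: $\mathcal{D}(G)$ denotes the number of conjugacy classes of nontrivial subgroups $H$ of the finite group $G$ with $N_G(H)\neq H$; $\mathcal{D}_n$ is the family of finite groups $G$ with $\mathcal{D}(G)=n$. *)

From mathcomp Require Import all_boot all_fingroup all_solvable.
From mathcomp Require Import pgroup nilpotent commutator.
Set Implicit Arguments. Unset Strict Implicit. Unset Printing Implicit Defensive.
Local Open Scope group_scope.

Definition nonselfnorm_subgroups (gT : finGroupType) (G : {set gT}) : {set {set gT}} :=
  [set H : {set gT} | [&& group_set H, H \subset G, H != 1 & 'N_G(H) != H]].

Definition Dnum (gT : finGroupType) (G : {set gT}) : nat :=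
  #|[set H :^: G | H in nonselfnorm_subgroups G]|.

(* Derived length: least k with G^`(k) = 1 (searched among k <= #|G|,
   which suffices for solvable groups; analogous to MathComp's nil_class). *)
Definition derived_length (gT : finGroupType) (G : {set gT}) : nat :=
  index 1 (mkseq (fun k => G^`(k)) #|G|.+1).

From mathcomp Require Import all_boot all_fingroup all_solvable.
From mathcomp Require Import pgroup nilpotent commutator.
From mathcomp Require Import zify.
From mathcomp Require Import extremal.
Set Implicit Arguments. Unset Strict Implicit. Unset Printing Implicit Defensive.
Local Open Scope group_scope.

(* In a nilpotent group every proper subgroup is properly contained in its
   normaliser, so D(G) counts the conjugacy classes of nontrivial proper
   subgroups. For a p-group G of class c >= 2 the preimages of the subgroups
   counted by D(G/Z(G)) properly contain Z(G), which is counted too, so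
   D(G) >= D(G/Z(G)) + 1, and even + 2 if some nontrivial proper subgroup
   misses Z(G). Otherwise Z(G) is the unique subgroup of order p, G is
   generalised quaternion of order 2^(c+1), and counting the subgroups of two
   maximal subgroups gives D(G) >= 2c directly. Since D(H) >= 3 for the
   noncyclic group H = G/Z(G) when c = 2, induction on c gives D(G) >= 2c.
   The derived length bound follows from G^(k) <= gamma_(2^k)(G), a
   consequence of the three subgroup lemma. *)

Definition nonselfnorm_classes (gT : finGroupType) (G : {set gT}) :=
  [set H :^: G | H in nonselfnorm_subgroups G].

Section NonselfnormSubgroups.
Variable gT : finGroupType.
Implicit Types G H K M : {group gT}.

Lemma leq_Dnum_invariant G (code : {set gT} -> nat) k :
  {in nonselfnorm_subgroups G & G, forall A g, code (A :^ g) = code A} ->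
  (forall i, i < k -> exists2 A, A \in nonselfnorm_subgroups G & code A = i) ->
  k <= Dnum G.
Proof.
move=> codeJ code_onto; rewrite /Dnum.
pose code_class (c : {set {set gT}}) := code (odflt set0 [pick A in c]).
rewrite cardE -(size_map code_class) -(size_iota 0 k).
apply: (uniq_leq_size (iota_uniq 0 k)) => i; rewrite mem_iota add0n => /= ltik.
have [A SA <-] := code_onto i ltik; apply/mapP; exists (A :^: G).
  by rewrite mem_enum; apply: imset_f.
rewrite /code_class; case: pickP => [B /imsetP[g Gg ->] /= | /(_ A)].
  by rewrite codeJ.
by have := orbit_refl 'Js G A; rewrite orbitJs => ->.
Qed.

Lemma nonselfnorm_nil G (A : {set gT}) : nilpotent G ->
  (A \in nonselfnorm_subgroups G) = [&& group_set A, A \subset G, A != 1 & A != G].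
Proof.
move=> nilG; rewrite inE; apply: andb_id2l => gA.
pose H := Group gA; rewrite -[A]/(gval H).
apply: andb_id2l => sHG; apply: andb_id2l => _.
apply/idP/idP; first by apply: contra => /eqP->; rewrite (setIidPl (normG G)).
move=> neHG; have prHG : H \proper G by rewrite properEneq neHG.
by have := nilpotent_proper_norm nilG prHG; rewrite properEneq eq_sym => /andP[].
Qed.

Lemma nonselfnorm_proper_sub G M K : nilpotent G -> M \proper G -> K \subset M ->
  K :!=: 1 -> gval K \in nonselfnorm_subgroups G.
Proof.
move=> nilG prM sKM ntK.
rewrite nonselfnorm_nil // groupP ntK (subset_trans sKM (proper_sub prM)) /=.
by apply: contraTneq prM => eKG; rewrite -eKG properE sKM andbF.
Qed.

Lemma conjugates_normal G H : H <| G -> H :^: G = [set gval H].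
Proof.
move=> /normal_norm/normsP nHG; apply/setP=> B; rewrite inE.
apply/imsetP/eqP => [[g Gg ->]|->]; first exact: nHG.
by exists 1; rewrite ?group1 ?conjsg1.
Qed.

Lemma center_nonselfnorm G : nilpotent G -> ~~ abelian G ->
  gval 'Z(G) \in nonselfnorm_subgroups G.
Proof.
move=> nilG nabG; have ntG : G :!=: 1 by apply: contra nabG => /eqP->; exact: abelian1.
rewrite nonselfnorm_nil // groupP center_sub center_nil_eq1 // ntG /=.
by apply: contraNneq nabG => <-; exact: center_abelian.
Qed.

End NonselfnormSubgroups.

Section Quotient.
Variable gT : finGroupType.
Variables G L : {group gT}.
Hypotheses (nsLG : L <| G) (nilG : nilpotent G).

Let nLG : G \subset 'N(L) := normal_norm nsLG.

Lemma morphpre_nonselfnorm (A : {set coset_of L}) :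
  A \in nonselfnorm_subgroups (G / L) -> coset L @*^-1 A \in nonselfnorm_subgroups G.
Proof.
rewrite !nonselfnorm_nil ?quotient_nil // => /and4P[gA sAG ntA neAG].
apply/and4P; split.
- exact: (@morphpre_groupset _ _ _ (coset_morphism L) (Group gA)).
- by rewrite -(quotientGK nsLG) morphpreS.
- by apply: contra ntA => /eqP e; rewrite -(cosetpreK A) e quotient1.
- by apply: contra neAG => /eqP e; rewrite -(cosetpreK A) e.
Qed.

Lemma morphpre_conjugates (A : {set coset_of L}) :
  (fun B => coset L @*^-1 B) @: (A :^: (G / L)) = coset L @*^-1 A :^: G.
Proof.
rewrite /conjugates /quotient morphimEsub // -!imset_comp; apply: eq_in_imset => g Gg /=.
exact: morphpreJ (subsetP nLG g Gg).
Qed.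

Lemma morphpre_nonselfnorm_overgroup (A : {set coset_of L}) (K : {set gT}) :
  A \in nonselfnorm_subgroups (G / L) -> K \in coset L @*^-1 A :^: G ->
  (L \subset K) && (K != L).
Proof.
rewrite nonselfnorm_nil ?quotient_nil // => /and4P[gA _ ntA _] /imsetP[g Gg ->].
have nLg : L :^ g = L by apply: (normsP nLG).
rewrite -{1}nLg conjSg -{1}cosetpre1 morphpreS ?sub1set ?(group1 (Group gA)) //=.
apply: contra ntA => /eqP/(congr1 (conjugate^~ g^-1)); rewrite conjsgK.
by rewrite (normsP nLG) ?groupV // => e; rewrite -(cosetpreK A) e trivg_quotient.
Qed.

Lemma Dnum_quotient_add (E : {set {set {set gT}}}) :
  E \subset nonselfnorm_classes G ->
  (forall K : {set gT}, K :^: G \in E -> (L \subset K) ==> (K == L)) ->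
  Dnum (G / L) + #|E| <= Dnum G.
Proof.
move=> sEC hE; set pre := fun A : {set coset_of L} => coset L @*^-1 A.
have pre_inj : injective pre := can_inj (@cosetpreK _ L).
rewrite /Dnum -/(nonselfnorm_classes _) -(card_imset _ (@imset_inj _ _ pre pre_inj)).
rewrite -cardsUI; set preC := [set pre @: c | c : {set {set coset_of L}} in _].
(* Preimages properly contain L, which the classes in E do not. *)
have -> : preC :&: E = set0.
  apply/setP=> c; rewrite !inE; apply/andP=> [[/imsetP[_ /imsetP[A SA ->] ->] cE]].
  have /imsetP[K _ eK] := subsetP sEC _ cE; rewrite eK in cE.
  rewrite morphpre_conjugates in eK; have := hE K cE.
  have KA : K \in coset L @*^-1 A :^: G by rewrite eK; exact: (orbit_refl 'Js G K).
  by have /andP[-> /negbTE ->] := morphpre_nonselfnorm_overgroup SA KA.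
rewrite cards0 addn0 subset_leq_card // subUset sEC andbT.
apply/subsetP=> _ /imsetP[_ /imsetP[A SA ->] ->].
by rewrite morphpre_conjugates; apply/imset_f/morphpre_nonselfnorm.
Qed.

Lemma Dnum_quotient_addn2 (K : {set gT}) :
  gval L \in nonselfnorm_subgroups G -> K \in nonselfnorm_subgroups G ->
  ~~ (L \subset K) -> (Dnum (G / L)).+2 <= Dnum G.
Proof.
move=> SL SK nsubLK; have classL := conjugates_normal nsLG.
have KK : K \in K :^: G by exact: (orbit_refl 'Js G K).
have neLK : L :^: G != K :^: G.
  by apply: contraNneq nsubLK => eLK; move: KK; rewrite -eLK classL => /set1P->.
rewrite -addn2; have := Dnum_quotient_add (E := [set L :^: G; K :^: G]).
rewrite cards2 neLK; apply.
  by apply/subsetP=> _ /set2P[]->; apply: imset_f.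
move=> H; have HH : H \in H :^: G by exact: (orbit_refl 'Js G H).
case/set2P=> eH; move: HH; rewrite eH.
  by rewrite classL => /set1P->; rewrite eqxx implybT.
case/imsetP=> g Gg ->.
by rewrite -(normsP nLG g Gg) conjSg (negbTE nsubLK).
Qed.

End Quotient.

Section PGroupCount.
Variables (gT : finGroupType) (p : nat).
Hypothesis pr_p : prime p.
Implicit Types G H K M X : {group gT}.

Lemma logn_maximal G M : p.-group G -> maximal M G ->
  logn p #|G| = (logn p #|M|).+1.
Proof.
move=> pG maxM; rewrite -(Lagrange (proper_sub (maxgroupp maxM))).
rewrite (p_maximal_index pG maxM) lognM ?cardG_gt0 ?prime_gt0 //.
by rewrite (logn_prime p pr_p) eqxx addn1.
Qed.

Lemma logn_order_gt0 G y : p.-group G -> y \in G -> <[y]> :!=: 1 ->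
  0 < logn p #[y].
Proof.
move=> pG Gy ntY; have [_ p_dvd_y _] := pgroup_pdiv (mem_p_elt pG Gy) ntY.
by rewrite logn_gt0 mem_primes pr_p order_gt0.
Qed.

Lemma pgroup_logn_between G H k : p.-group G -> H \subset G ->
  logn p #|H| <= k <= logn p #|G| ->
  exists K, [/\ H \subset K, K \subset G & logn p #|K| = k].
Proof.
move: {2}(logn p #|G| - k) (erefl (logn p #|G| - k)) => d.
elim: d G => [|d IH] G dE pG sHG /andP[leHk lekG].
  by exists G; split=> //; lia.
have [eHG|[M maxM sHM]] := maximal_exists sHG.
  by move: dE leHk; rewrite -eHG; lia.
have sMG : M \subset G := proper_sub (maxgroupp maxM).
have lHM : logn p #|H| <= logn p #|M| by rewrite dvdn_leq_log ?cardG_gt0 ?cardSg.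
have lGM := logn_maximal pG maxM.
have [K [sHK sKM lK]] := IH M ltac:(lia) (pgroupS sMG pG) sHM ltac:(lia).
by exists K; split=> //; apply: subset_trans sMG.
Qed.

Lemma nonselfnorm_logn_between G M H k : p.-group G -> M \proper G -> H \subset M ->
  0 < k -> logn p #|H| <= k <= logn p #|M| ->
  exists K, [/\ gval K \in nonselfnorm_subgroups G, H \subset K, K \subset M
              & logn p #|K| = k].
Proof.
move=> pG prMG sHM k_gt0 lek.
have [K [sHK sKM lK]] := pgroup_logn_between (pgroupS (proper_sub prMG) pG) sHM lek.
exists K; split=> //; apply: nonselfnorm_proper_sub (pgroup_nil pG) prMG sKM _.
by apply: contraTneq k_gt0 => K1; rewrite -lK K1 cards1 logn1.
Qed.

Lemma cyclic_pgroup_maximal_eq G X M : p.-group G -> cyclic G ->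
  maximal X G -> maximal M G -> X :=: M.
Proof.
move=> pG cycG maxX maxM; have sXG := proper_sub (maxgroupp maxX).
apply/eqP; rewrite (eq_subG_cyclic cycG sXG (proper_sub (maxgroupp maxM))).
rewrite -(eqn_pmul2r (prime_gt0 pr_p)) -{1}(p_maximal_index pG maxX).
by rewrite -(p_maximal_index pG maxM) !Lagrange // proper_sub ?(maxgroupp maxM).
Qed.

Lemma Dnum_two_maximal G X M y : p.-group G -> maximal X G -> maximal M G ->
  y \in M -> y \notin X -> 2 * logn p #|G| <= Dnum G + logn p #[y].
Proof.
move=> pG maxX maxM My nXy; have nilG := pgroup_nil pG.
have [prX prM] := (maxgroupp maxX, maxgroupp maxM).
have [sXG sMG] := (proper_sub prX, proper_sub prM).
have [x Xx nMx] : exists2 x, x \in X & x \notin M.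
  apply/subsetPn; apply: contra nXy => sXM.
  by rewrite -((maxgroupP maxX).2 M prM sXM).
have Gy := subsetP sMG y My; have Gx := subsetP sXG x Xx.
have nXxy : x * y \notin X by rewrite groupMl.
have nMxy : x * y \notin M by rewrite groupMr.
have Sxy : gval <[x * y]> \in nonselfnorm_subgroups G.
  rewrite nonselfnorm_nil // groupP cycle_subG groupM // cycle_eq1.
  rewrite (contraNneq _ nXxy) => [|->]; last exact: group1.
  apply: contra nXy => /eqP eG.
  by rewrite (cyclic_pgroup_maximal_eq pG _ maxX maxM) // -eG cycle_cyclic.
have ntY : <[y]> :!=: 1 by rewrite cycle_eq1; apply: contraNneq nXy => ->.
have lGX := logn_maximal pG maxX; have lGM := logn_maximal pG maxM.
have sYM : <[y]> \subset M by rewrite cycle_subG.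
have le_yM : logn p #[y] <= logn p #|M| by rewrite dvdn_leq_log ?cardG_gt0 ?cardSg.
have e_gt0 := logn_order_gt0 pG Gy ntY.
set m := logn p #|G| in lGX lGM *; set e := logn p #[y] in le_yM e_gt0 *.
(* The subgroups of X are counted by their order, those of M containing y by
   their order shifted past the former, and <[x * y]> lies in neither. *)
pose code (A : {set gT}) :=
  if A \subset X then logn p #|A| else if A \subset M then logn p #|A| + m - e else 0.
rewrite addnC -leq_subLR.
apply: (@leq_Dnum_invariant _ G code) => [A g _ Gg | i lt_i].
  have nG := fun H (nsHG : H <| G) => normsP (normal_norm nsHG) _ (groupVr Gg).
  have [nsXG nsMG] := (p_maximal_normal pG maxX, p_maximal_normal pG maxM).
  by rewrite /code !sub_conjg !nG ?cardJg.
have [-> | i_gt0] := posnP i.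
  exists (gval <[x * y]>) => //; rewrite /code !cycle_subG.
  by rewrite (negbTE nXxy) (negbTE nMxy).
have [le_iX | lt_Xi] := leqP i (logn p #|X|).
  have [K [SK _ sKX lK]] := nonselfnorm_logn_between pG prX (sub1G X) i_gt0
    ltac:(by rewrite cards1 logn1 le_iX).
  by exists (gval K); rewrite // /code sKX.
have k_gt0 : 0 < i - m + e by clear -e_gt0 lt_Xi lGX; lia.
have le_k : e <= i - m + e <= logn p #|M|.
  by apply/andP; clear -lt_Xi lt_i lGX lGM; lia.
have [K [SK sYK sKM lK]] := nonselfnorm_logn_between pG prM sYM k_gt0 le_k.
have nKX : ~~ (K \subset X) by apply: contra nXy => /subsetP; apply; rewrite -cycle_subG.
by exists (gval K); rewrite // /code (negbTE nKX) sKM lK; clear -lt_Xi lGX; lia.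
Qed.

Lemma Dnum_noncyclic G : p.-group G -> ~~ cyclic G -> 3 <= Dnum G.
Proof.
move=> pG ncycG; have ntG : G :!=: 1 by apply: contra ncycG => /eqP->; exact: cyclic1.
have [eG1|[X maxX _]] := maximal_exists (sub1G G); first by rewrite -eG1 eqxx in ntG.
have [y Gy nXy] : exists2 y, y \in G & y \notin X.
  by apply/subsetPn; have := maxgroupp maxX; rewrite properE => /andP[].
have sYG : <[y]> \subset G by rewrite cycle_subG.
have [eYG|[M maxM sYM]] := maximal_exists sYG.
  by rewrite -eYG cycle_cyclic in ncycG.
have My : y \in M by rewrite -cycle_subG.
have ntY : <[y]> :!=: 1 by rewrite cycle_eq1; apply: contraNneq nXy => ->.
have le_yM : logn p #[y] <= logn p #|M| by rewrite dvdn_leq_log ?cardG_gt0 ?cardSg.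
have lGM := logn_maximal pG maxM; have e_gt0 := logn_order_gt0 pG Gy ntY.
have := Dnum_two_maximal pG maxX maxM My nXy.
by clear -le_yM lGM e_gt0; lia.
Qed.

End PGroupCount.

Lemma Dnum_quaternion (gT : finGroupType) (G : {group gT}) :
  2.-group G -> extremal_class G = Quaternion -> 2 * nil_class G <= Dnum G.
Proof.
move=> pG /quaternion_classP[n n_gt2 isoG].
have [[x y] genG [oy _ _]] := generators_quaternion n_gt2 isoG.
have [_ [_ _ _ clG] _ [_ maxG] _] := quaternion_structure n_gt2 genG isoG.
have [_ maxX _ _ _] := extremal_generators_facts (isT : prime 2) genG.
have [oG _ _ /setDP[_ nXy]] := genG.
have maxMy : maximal <<y ^: G>> G by rewrite maxG /= eqxx orbT.
have := Dnum_two_maximal (isT : prime 2) pG maxX maxMy (mem_gen (class_refl G y)) nXy.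
rewrite clG oG oy pfactorK // (_ : logn 2 4 = 2) //.
by clear -n_gt2; lia.
Qed.

Lemma quaternion_center_nonselfnorm (gT : finGroupType) (p : nat) (G : {group gT}) :
  prime p -> p.-group G -> ~~ cyclic G ->
  {in nonselfnorm_subgroups G, forall A : {set gT}, 'Z(G) \subset A} ->
  (p == 2) && (extremal_class G == Quaternion).
Proof.
move=> pr_p pG ncycG sZS; have ntG : G :!=: 1.
  by apply: contra ncycG => /eqP->; exact: cyclic1.
have ntZ : 'Z(G) :!=: 1 by rewrite center_nil_eq1 ?(pgroup_nil pG).
(* Every subgroup of order p contains 'Z(G), so it is the only one. *)
have Z_cycle w : w \in G -> #[w] = p -> 'Z(G) = <[w]>.
  move=> Gw ow; have ntW : <[w]> :!=: 1.
    by rewrite cycle_eq1 -order_eq1 ow gtn_eqF ?prime_gt1.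
  have sZW : 'Z(G) \subset <[w]>.
    apply: sZS; rewrite (nonselfnorm_nil _ (pgroup_nil pG)).
    apply/and4P; split; [exact: groupP | by rewrite cycle_subG | exact: ntW |].
    by apply: contraNneq ncycG => <-; exact: cycle_cyclic.
  have oZ : #|'Z(G)| = p.
    apply/(prime_nt_dvdP pr_p); first by rewrite -trivg_card1.
    by rewrite -ow cardSg.
  by apply/eqP; rewrite eqEcard sZW -orderE ow oZ leqnn.
have [_ p_dvd_G _] := pgroup_pdiv pG ntG.
have [u Gu ou] := Cauchy pr_p p_dvd_G.
have Ohm1_Z : 'Ohm_1(G) = 'Z(G).
  apply/eqP; rewrite eqEsubset (OhmE 1 pG) gen_subG; apply/andP; split.
    apply/subsetP=> w /setIP[Gw]; rewrite inE expn1 -order_dvdn => w_p.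
    have [-> | ntw] := eqVneq w 1; first exact: group1.
    have ow : #[w] = p by apply/(prime_nt_dvdP pr_p); rewrite ?order_eq1.
    by move: (cycle_id w); rewrite -(Z_cycle w Gw ow).
  by rewrite (Z_cycle u Gu ou) cycle_subG mem_gen // !inE Gu expn1 -ou expg_order eqxx.
have /(prime_Ohm1P pG ntG) : #|'Ohm_1(G)| = p by rewrite Ohm1_Z (Z_cycle u Gu ou).
by rewrite (negbTE ncycG).
Qed.

Section DerivedLength.
Variable gT : finGroupType.
Implicit Types G N A B C : {group gT}.

Lemma three_subgroup_mod G N A B C :
  N <| G -> A \subset G -> B \subset G -> C \subset G ->
  [~: A, B, C] \subset N -> [~: B, C, A] \subset N -> [~: C, A, B] \subset N.
Proof.
move=> nsNG sAG sBG sCG; have nNG := normal_norm nsNG.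
have comm3_mod (X Y Z : {group gT}) : X \subset G -> Y \subset G -> Z \subset G ->
    ([~: X, Y, Z] \subset N) = ([~: X / N, Y / N, Z / N] :==: 1).
  move=> sXG sYG sZG; have sXYG := subset_trans (commgSS sXG sYG) (der1_subG G).
  have sXYZN := subset_trans (commgSS sXYG sZG) (subset_trans (der1_subG G) nNG).
  rewrite -subG1 -quotient_sub1 //.
  by rewrite !quotientR // ?(subset_trans _ nNG).
rewrite !comm3_mod // => /eqP cABC /eqP cBCA; apply/eqP.
exact: three_subgroup.
Qed.

Lemma commg_lcn G i j : [~: 'L_i.+1(G), 'L_j.+1(G)] \subset 'L_(i + j).+2(G).
Proof.
elim: j i => [|j IH] i; first by rewrite addn0.
rewrite commGC; change ([~: 'L_j.+1(G), G, 'L_i.+1(G)] \subset 'L_(i + j.+1).+2(G)).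
apply: (three_subgroup_mod (A := G) (lcn_normal _ G) (subxx G) (lcn_sub _ _) (lcn_sub _ _)).
  by rewrite [[~: G, _]]commGC -lcnSn -addSnnS; apply: IH.
by apply: subset_trans (commSg G (IH i)) _; rewrite addnS.
Qed.

Lemma der_sub_lcn G k : G^`(k) \subset 'L_(2 ^ k)(G).
Proof.
elim: k => [|k IH] //; rewrite dergSn; apply: subset_trans (commgSS IH IH) _.
rewrite -(prednK (expn_gt0 2 k)) (subset_trans (commg_lcn _ _ _)) //.
by rewrite lcn_sub_leq // expnS; have := expn_gt0 2 k; lia.
Qed.

Lemma derived_length_leq G k : G^`(k) = 1 -> derived_length G <= k.
Proof.
move=> Gk1; rewrite /derived_length.
have [ltGk | leKG] := ltnP #|G| k.
  by rewrite (leq_trans (index_size _ _)) // size_mkseq.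
rewrite leqNgt; apply/negP => /(before_find 1).
by rewrite nth_mkseq ?ltnS // Gk1 /= eqxx.
Qed.

Lemma derived_length_nil_class G : nilpotent G -> 0 < nil_class G ->
  2 ^ derived_length G <= 2 * nil_class G.
Proof.
move=> nilG c_gt0; have le_tc := trunc_logP (isT : 1 < 2) c_gt0.
have lt_ct := trunc_log_ltn (nil_class G) (isT : 1 < 2).
set t := trunc_log 2 (nil_class G) in le_tc lt_ct.
have Gt1 : G^`(t.+1) = 1.
  apply/trivgP; apply: subset_trans (der_sub_lcn G t.+1) _.
  by rewrite -(lcn_nil_classP _ nilG (leqnn _)) lcn_sub_leq.
rewrite (leq_trans (leq_pexp2l _ (derived_length_leq Gt1))) //.
by rewrite expnS leq_mul2l le_tc.
Qed.

End DerivedLength.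

Lemma Dnum_quotient_center_step (gT : finGroupType) (p : nat) (G : {group gT}) :
  prime p -> p.-group G -> ~~ abelian G ->
  2 * (nil_class G).-1 <= Dnum (G / 'Z(G)) -> 2 * nil_class G <= Dnum G.
Proof.
move=> pr_p pG nabG DQ; have nilG := pgroup_nil pG.
have SZ := center_nonselfnorm nilG nabG.
have c_gt0 : 0 < nil_class G.
  by rewrite lt0n nil_class0; apply: contra nabG => /eqP->; exact: abelian1.
case: (pickP [pred K in nonselfnorm_subgroups G | ~~ ('Z(G) \subset K)]).
  move=> K /andP[SK nZK].
  have : (Dnum (G / 'Z(G))).+2 <= Dnum G.
    exact: (@Dnum_quotient_addn2 _ G 'Z(G)%G (center_normal G) nilG K SZ SK nZK).
  by move: DQ; clear -c_gt0; lia.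
move=> sZS; have ncycG : ~~ cyclic G by apply: contra nabG; exact: cyclic_abelian.
have /andP[/eqP p2 /eqP qG] : (p == 2) && (extremal_class G == Quaternion).
  apply: quaternion_center_nonselfnorm pr_p pG ncycG _ => A SA.
  by have := sZS A; rewrite /= SA /= => /negbFE.
by rewrite p2 in pG; exact: Dnum_quaternion.
Qed.

Lemma double_nil_class_leq_Dnum (gT : finGroupType) (p : nat) (G : {group gT}) :
  prime p -> p.-group G -> 1 < nil_class G -> 2 * nil_class G <= Dnum G.
Proof.
move=> pr_p; move: gT G; suff IH c gT (G : {group gT}) :
    p.-group G -> nil_class G = c.+2 -> 2 * c.+2 <= Dnum G.
  by move=> gT G pG; case cG: (nil_class G) => [|[|c]] // _; exact: IH pG cG.
elim: c gT G => [|c IH] gT G pG cG; have nabG : ~~ abelian G by rewrite -nil_class1 cG.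
all: have := Dnum_quotient_center_step pr_p pG nabG; rewrite cG; apply.
  have ncycQ : ~~ cyclic (G / 'Z(G)).
    by apply: contra nabG; exact: cyclic_center_factor_abelian.
  exact: leq_trans (Dnum_noncyclic pr_p (quotient_pgroup _ pG) ncycQ).
apply: IH (quotient_pgroup _ pG) _.
by rewrite nil_class_quotient_center ?(pgroup_nil pG) // cG.
Qed.

Theorem mainTheorem5 (p n : nat) (gT : finGroupType) (G : {group gT}) :
  prime p -> (p.-group G)%g -> 1 < n -> Dnum G = n ->
  2 * nil_class G <= n /\ 2 ^ derived_length G <= n.
Proof.
move=> pr_p pG n_gt1 DnumG; subst n; have nilG := pgroup_nil pG.
have class_bound : 2 * nil_class G <= Dnum G.
  have [le_c1 | lt_1c] := leqP (nil_class G) 1.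
    by clear -le_c1 n_gt1; lia.
  exact: double_nil_class_leq_Dnum pr_p pG lt_1c.
split=> //; have [G1 | ntG] := eqVneq G 1%G.
  have /derived_length_leq : G^`(0) = 1 by rewrite G1.
  by rewrite leqn0 => /eqP->; exact: ltnW.
rewrite (leq_trans (derived_length_nil_class nilG _)) //.
by rewrite lt0n nil_class0.
Qed.
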